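(* Let $\Omega = \Omega_1 \cup \dots \cup \Omega_k$ be a finite grid partitioned into $k$ pairwise disjoint parts ($\Omega_i \cap \Omega_j = \emptyset$ for $i \neq j$), each part being a logically rectangular (structured) set of cells. Suppose the grid has been coarsened by semi-coarsening: in each part $\Omega_m$ a coordinate direction is chosen and the coarse points $\Omega^c_m \subseteq \Omega_m$ are every other line/plane of cells perpendicular to that direction; let $\Omega^c = \Omega^c_1 \cup \dots \cup \Omega^c_k$. Let $P \in \mathbb{R}^{\Omega \times \Omega^c}$ be an interpolation matrix that acts only within parts (i.e. $P_{f,c} = 0$ whenever $f \in \Omega_m$, $c \in \Omega^c_n$ with $m \neq n$), maps coarse points onto themselves (for $c \in \Omega^c_m$ the row of $P$ indexed by $c$ has a single nonzero entry, equal to $1$, in column $c$), and interpolates each fine point $f \in \Omega_m \setminus \Omega^c_m$ using at most two coarse points of $\Omega^c_m$ adjacent to $f$ and aligned with $f$ in the coarsening direction (all other entries of row $f$ are zero). Let $U \in \mathbb{R}^{\Omega \times \Omega}$ be a matrix whose graph contains only connections between boundary points of different parts, i.e. $u_{i,j} = 0$ if $i \in \Omega_m \setminus \delta\Omega_m$ for some $m$, or $j \in \Omega_n \setminus \delta\Omega_n$ for some $n$, and $u_{i,j} = 0$ whenever $i, j \in \Omega_m$ for some $m$. Then the coarse unstructured matrix $U_c = P^T U P \in \mathbb{R}^{\Omega^c \times \Omega^c}$ likewise contains only connections between boundary points of different parts: $u^c_{i,j} = 0$ if $i \in \Omega^c_m \setminus \delta\Omega^c_m$ for some $m$, or $j \in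 \Omega^c_n \setminus \delta\Omega^c_n$ for some $n$, and $u^c_{i,j} = 0$ whenever $i, j \in \Omega^c_m$ for some $m$.
   Context: The part boundary $\delta\Omega_m \subseteq \Omega_m$ is the set of points of $\Omega_m$ that are connected to points of other parts in the graph of $U$ (i.e. $i \in \delta\Omega_m$ iff $u_{i,j} \neq 0$ or $u_{j,i} \neq 0$ for some $j \notin \Omega_m$). The coarse part boundary $\delta\Omega^c_m \subseteq \Omega^c_m$ consists of the coarse points of $\Omega^c_m$ that are either themselves points of $\delta\Omega_m$ or are coarse points used to interpolate some fine point of $\delta\Omega_m$; equivalently, $\delta\Omega^c_m = \{c \in \Omega^c_m : P_{f,c} \neq 0 \text{ for some } f \in \delta\Omega_m\}$. The graph of a matrix has an edge between indices $i$ and $j$ when the $(i,j)$ entry is nonzero. *)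

From HB Require Import structures.
From mathcomp Require Import all_boot all_order all_algebra.
From mathcomp Require Export reals.
Set Implicit Arguments. Unset Strict Implicit. Unset Printing Implicit Defensive.
Import Order.TTheory GRing.Theory Num.Theory.
Local Open Scope ring_scope.

(* The grid Omega is a finite type T.  [part : T -> 'I_k] assigns each point
   to its (unique) part, so Omega_1, ..., Omega_k are pairwise disjoint and
   cover Omega.  [coord : T -> {ffun 'I_d -> nat}] gives the logical
   (structured) d-dimensional index of a cell inside its part. *)

Definition logically_rectangular (T : finType) (k d : nat)
    (part : T -> 'I_k) (coord : T -> {ffun 'I_d -> nat})
    (sz : 'I_k -> {ffun 'I_d -> nat}) : Prop :=
  forall m : 'I_k,
    {in [pred x | part x == m] &, injective coord} /\
    (forall v : {ffun 'I_d -> nat},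
        (exists x, part x = m /\ coord x = v) <-> (forall i, v i < sz m i)%N).

(* Semi-coarsening: in part m, direction dir m is chosen, and the coarse
   points are every other plane perpendicular to it (those whose index in
   direction dir m has parity off m). *)
Definition coarse (T : finType) (k d : nat)
    (part : T -> 'I_k) (coord : T -> {ffun 'I_d -> nat})
    (dir : 'I_k -> 'I_d) (off : 'I_k -> bool) : pred T :=
  fun x => odd (coord x (dir (part x))) == off (part x).

Definition aligned_nbr (T : finType) (d : nat)
    (coord : T -> {ffun 'I_d -> nat}) (a : 'I_d) (f c : T) : bool :=
  [forall i : 'I_d,
     if i == a then (coord c i == (coord f i).+1)%N || (coord f i == (coord c i).+1)%N
     else coord c i == coord f i].

(* Part boundary: i is in delta Omega_{part i} iff it is connected in the
   graph of U to a point of another part. *)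
Definition part_boundary (R : nzRingType) (T : finType) (k : nat)
    (part : T -> 'I_k) (U : T -> T -> R) (i : T) : bool :=
  [exists j : T, (part j != part i) && ((U i j != 0) || (U j i != 0))].

(* Coarse part boundary: c in Omega^c_m with P_{f,c} <> 0 for some
   f in delta Omega_m. *)
Definition coarse_part_boundary (R : nzRingType) (T : finType) (k : nat)
    (part : T -> 'I_k) (U : T -> T -> R) (C : pred T)
    (P : T -> {x : T | C x} -> R) (c : {x : T | C x}) : bool :=
  [exists f : T, [&& part f == part (val c), part_boundary part U f & P f c != 0]].

Definition galerkin (R : nzRingType) (T : finType) (C : pred T)
    (P : T -> {x : T | C x} -> R) (U : T -> T -> R)
    (a b : {x : T | C x}) : R :=
  \sum_(i : T) \sum_(j : T) P i a * U i j * P j b.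

From HB Require Import structures.
From mathcomp Require Import all_boot all_order all_algebra.
From mathcomp Require Import reals.
Set Implicit Arguments. Unset Strict Implicit. Unset Printing Implicit Defensive.
Import Order.TTheory GRing.Theory Num.Theory.
Local Open Scope ring_scope.

(* An entry (P^T U P)_{a,b} can only be nonzero through an edge (i, j) of U with
   P_{i,a} and P_{j,b} nonzero.  Since P acts within parts, i lies in the part
   of a and j in the part of b; since U only joins boundary points of different
   parts, i and j are part-boundary points, which puts a and b in the coarse
   part boundary, and a and b lie in different parts. *)

Section GalerkinSparsity.

Variables (R : nzRingType) (T : finType) (k : nat) (part : T -> 'I_k).
Variables (C : pred T) (P : T -> {x : T | C x} -> R) (U : T -> T -> R).

Lemma galerkin_eq0 a b :
  (forall i j, P i a != 0 -> P j b != 0 -> U i j = 0) -> galerkin P U a b = 0.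
Proof.
move=> noedge; rewrite /galerkin big1 // => i _; rewrite big1 // => j _.
have [->|Pia] := eqVneq (P i a) 0; first by rewrite !mul0r.
have [->|Pjb] := eqVneq (P j b) 0; first by rewrite mulr0.
by rewrite noedge // mulr0 mul0r.
Qed.

Hypothesis P_local : forall f c, part f != part (val c) -> P f c = 0.

Lemma part_of_support f c : P f c != 0 -> part f = part (val c).
Proof. by apply: contraNeq => /P_local ->. Qed.

Lemma coarse_part_boundaryP f c :
  P f c != 0 -> part_boundary part U f -> coarse_part_boundary part U P c.
Proof.
move=> Pfc bf; apply/existsP; exists f.
by rewrite (part_of_support Pfc) eqxx bf Pfc.
Qed.

Hypothesis U_row_boundary : forall i j, ~~ part_boundary part U i -> U i j = 0.
Hypothesis U_col_boundary : forall i j, ~~ part_boundary part U j -> U i j = 0.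
Hypothesis U_inter_part : forall i j, part i = part j -> U i j = 0.

Lemma galerkin_row_interior a b :
  ~~ coarse_part_boundary part U P a -> galerkin P U a b = 0.
Proof.
move=> a_int; apply: galerkin_eq0 => i j Pia _; apply: U_row_boundary.
by apply: contra a_int; apply: coarse_part_boundaryP.
Qed.

Lemma galerkin_col_interior a b :
  ~~ coarse_part_boundary part U P b -> galerkin P U a b = 0.
Proof.
move=> b_int; apply: galerkin_eq0 => i j _ Pjb; apply: U_col_boundary.
by apply: contra b_int; apply: coarse_part_boundaryP.
Qed.

Lemma galerkin_same_part a b :
  part (val a) = part (val b) -> galerkin P U a b = 0.
Proof.
move=> ab; apply: galerkin_eq0 => i j Pia Pjb; apply: U_inter_part.
by rewrite (part_of_support Pia) (part_of_support Pjb).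
Qed.

End GalerkinSparsity.

Theorem theorem3p1
  (R : realType) (T : finType) (k d : nat)
  (part : T -> 'I_k) (coord : T -> {ffun 'I_d -> nat})
  (sz : 'I_k -> {ffun 'I_d -> nat})
  (dir : 'I_k -> 'I_d) (off : 'I_k -> bool)
  (P : T -> {x : T | coarse part coord dir off x} -> R)
  (U : T -> T -> R) :
  logically_rectangular part coord sz ->
  (* P acts only within parts *)
  (forall f c, part f != part (val c) -> P f c = 0) ->
  (* P maps coarse points onto themselves *)
  (forall c c' : {x : T | coarse part coord dir off x},
      P (val c) c' = (c == c')%:R) ->
  (* fine points are interpolated from adjacent aligned coarse points *)
  (forall f c, ~~ coarse part coord dir off f -> P f c != 0 ->
      part (val c) = part f /\ aligned_nbr coord (dir (part f)) f (val c)) ->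
  (* U only connects boundary points of different parts *)
  (forall i j, ~~ part_boundary part U i -> U i j = 0) ->
  (forall i j, ~~ part_boundary part U j -> U i j = 0) ->
  (forall i j, part i = part j -> U i j = 0) ->
  let Uc := galerkin P U in
  (forall a b, ~~ coarse_part_boundary part U P a -> Uc a b = 0) /\
  (forall a b, ~~ coarse_part_boundary part U P b -> Uc a b = 0) /\
  (forall a b, part (val a) = part (val b) -> Uc a b = 0).
Proof.
move=> _ P_local _ _ U_row U_col U_part Uc.
split; [|split].
- exact: galerkin_row_interior.
- exact: galerkin_col_interior.
- exact: galerkin_same_part.
Qed.
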